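(* Let $A$ be a connectivity class of external positions, all of whose positions $p$ have $|B(p)|=m$ and sorted characteristics $j_1\le\dots\le j_{n-m}$. For $S\subseteq\{1,\dots,n\}$ with $|S|=m$ and $\varepsilon:S\to\{0,k-1\}$ put $Cl(S,\varepsilon)=\{p\in A: B(p)=S,\ p_s=\varepsilon(s)\ \forall s\in S\}$. Then $A$ is the disjoint union of the sets $Cl(S,\varepsilon)$; in the solved coloring, the cubies in two positions of $A$ have the same coloring if and only if the positions lie in the same set $Cl(S,\varepsilon)$. Moreover, if $A$ is not central, every nonempty $Cl(S,\varepsilon)$ contains at least two positions (so is a cluster), while if $A$ is central every nonempty $Cl(S,\varepsilon)$ consists of a single position.
   Context: Fix integers $k\ge 2$, $n\ge 3$, $M=\{0,\dots,k-1\}$. Positions are $p\in M^n$, the cubie at $p$ being $\prod_i[p_i,p_i+1]\subset[0,k]^n$; $B(p)=\{i:p_i\in\{0,k-1\}\}$, $p$ external if $B(p)\ne\emptyset$. For $x\in\{1,\dots,k-2\}$, $\bar x=\min(x,k-1-x)$; the characteristics of $p$ are the values $\bar p_i$, $i\notin B(p)$, sorted non-decreasingly. For distinct $i,j$, $\psi_{i,j}:M^n\to M^n$ is $(\psi_{i,j}p)_i=k-1-p_j$, $(\psi_{i,j}p)_j=p_i$, other coordinates unchanged. A move is given by distinct $i,j$ and constants $c_l\in M$ ($l\notin\{i,j\}$) and applies $\psi_{i,j}$ to all positions $p$ with $p_l=c_l$ ($l\notin\{i,j\}$), fixing the others; a combination is a finite sequence of moves. Connectivity classes are the orbits of external positions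 under combinations (all positions in one class have the same $|B(p)|$ and the same characteristics). A class is central if all its characteristics equal $(k-1)/2$ (vacuously true when $m=n$). Solved coloring: for each $t$ with $2\le t\le n-1$, each $t$-dimensional face $\{x\in[0,k]^n: x_s=e_s\ (s\in S)\}$ ($|S|=n-t$, $e_s\in\{0,k\}$) of the big cube gets its own color, distinct faces getting distinct colors, and each $t$-dimensional face of a cubie contained in a $t$-face of the big cube receives that face's color. Two cubies have the same coloring if the sets of colors on them coincide. A cluster is the set of all cubies of one class having the same coloring, provided it has more than one element. *)

From mathcomp Require Import all_boot all_order all_algebra.
Set Implicit Arguments. Unset Strict Implicit. Unset Printing Implicit Defensive.
Import Order.TTheory GRing.Theory Num.Theory.

Section Cube.
Variables k n : nat.

Definition pos := {ffun 'I_n -> 'I_k}.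

Definition Bset (p : pos) : {set 'I_n} :=
  [set i | ((p i : nat) == 0) || ((p i : nat) == k.-1)].

Definition external (p : pos) : bool := Bset p != set0.

(* psi_{i,j}: (psi p)_i = k-1-p_j, (psi p)_j = p_i, others unchanged.
   rev_ord x has value k - x.+1 = k-1-x. *)
Definition psi (i j : 'I_n) (p : pos) : pos :=
  [ffun l => if l == i then rev_ord (p j) else if l == j then p i else p l].

Definition apply_move (i j : 'I_n) (c : {ffun 'I_n -> 'I_k}) (p : pos) : pos :=
  if [forall l, ((l != i) && (l != j)) ==> (p l == c l)] then psi i j p else p.

Definition move_rel : rel pos :=
  fun p q => [exists i : 'I_n, exists j : 'I_n, exists c : {ffun 'I_n -> 'I_k},
                (i != j) && (apply_move i j c p == q)].

Definition cclass (p0 : pos) : {set pos} := [set q | connect move_rel p0 q].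

Definition bar (x : nat) : nat := minn x (k.-1 - x).
Definition chars (p : pos) : seq nat :=
  sort leq [seq bar (p i) | i <- enum (~: Bset p)].

(* central: all characteristics equal (k-1)/2, i.e. 2c+1 = k *)
Definition central (A : {set pos}) : bool :=
  [forall p in A, all (fun c => c.*2.+1 == k) (chars p)].

(* epsilon : S -> {0, k-1} encoded by e : 'I_n -> bool
   (false |-> 0, true |-> k-1); only values on S matter *)
Definition epsv (b : bool) : nat := if b then k.-1 else 0.

Definition Cl (A : {set pos}) (S : {set 'I_n}) (e : 'I_n -> bool) : {set pos} :=
  [set p in A | (Bset p == S) && [forall s in S, (p s : nat) == epsv (e s)]].

Local Open Scope ring_scope.

Definition in_cubie_face (p : pos) (T : {set 'I_n}) (f : 'I_n -> bool)
  (x : 'I_n -> rat) : Prop :=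
  forall i, if i \in T then ((p i)%:R <= x i) && (x i <= (p i)%:R + 1)
            else x i == (p i)%:R + (f i)%:R.

Definition in_big_face (S : {set 'I_n}) (e : 'I_n -> bool) (x : 'I_n -> rat) : Prop :=
  (forall i, (0 <= x i) && (x i <= k%:R)) /\
  (forall s, s \in S -> x s = if e s then k%:R else 0).

(* the cubie at p carries the color of the big (n-#|S|)-face (S,e)
   (where 2 <= n-#|S| <= n-1) iff some (n-#|S|)-face of the cubie
   is contained in that big face *)
Definition has_color (p : pos) (S : {set 'I_n}) (e : 'I_n -> bool) : Prop :=
  (0 < #|S|)%N /\ (#|S| + 2 <= n)%N /\
  exists (T : {set 'I_n}) (f : 'I_n -> bool),
    #|T| = (n - #|S|)%N /\
    (forall x, in_cubie_face p T f x -> in_big_face S e x).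

(* same coloring: same set of colors (colors = big faces, so (S,e) and
   (S,e') with e = e' on S are the same color; has_color respects this) *)
Definition same_coloring (p q : pos) : Prop :=
  forall S e, has_color p S e <-> has_color q S e.

End Cube.

From mathcomp Require Import all_boot all_order all_algebra.
From mathcomp Require Import perm zify.
Set Implicit Arguments. Unset Strict Implicit. Unset Printing Implicit Defensive.
Import Order.TTheory GRing.Theory Num.Theory.

(* A move psi_{ij} acts on coordinates as the transposition (i j) followed by the
   reversal x |-> k-1-x of coordinate i.  Lying on the boundary and being the
   midpoint (k-1)/2 are reversal-invariant properties of a coordinate value, so
   the number of boundary coordinates, and whether all interior coordinates are
   midpoints (which is centrality), are constant on a class.  The colors of a
   cubie are the big faces through some of its boundary coordinates, so two
   cubies are colored alike iff they have the same boundary coordinates with the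
   same values, i.e. lie in the same Cl(S, eps); in a central class these data
   determine the position.  Otherwise some interior coordinate x is off the
   midpoint.  Applying psi_{xy} twice reverses coordinates x and y, which stays
   in Cl(S, eps) when y is interior; if every other coordinate is on the
   boundary, the reversal of y is undone by one move in the plane of y and a
   third coordinate (here n >= 3 is used). *)

Section Positions.
Variables k n : nat.
Implicit Types (p q r : pos k n) (i j l : 'I_n) (x y : 'I_k).

Definition boundary x := ((x : nat) == 0) || ((x : nat) == k.-1).
Definition midpoint x := (x : nat).*2.+1 == k.

Lemma in_Bset p i : (i \in Bset p) = boundary (p i).
Proof. by rewrite inE. Qed.

Lemma boundary_rev x : boundary (rev_ord x) = boundary x.
Proof. rewrite /boundary /=; have := ltn_ord x; lia. Qed.

Lemma midpoint_rev x : midpoint (rev_ord x) = midpoint x.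
Proof. rewrite /midpoint /= -!addnn; have := ltn_ord x; lia. Qed.

Lemma rev_ord_eq x : (rev_ord x == x) = midpoint x.
Proof. rewrite /midpoint -addnn -val_eqE /=; have := ltn_ord x; lia. Qed.

Lemma boundary_eq_or_rev x y : boundary x -> boundary y -> y = x \/ y = rev_ord x.
Proof.
case: (eqVneq y x) => [|nyx] bx b_y; [by left | right; apply: ord_inj => /=].
move: nyx bx b_y; rewrite -val_eqE /boundary /=; have := ltn_ord y; lia.
Qed.

Lemma psi_tpermE i j p l :
  psi i j p l = if l == i then rev_ord (p (tperm i j l)) else p (tperm i j l).
Proof.
rewrite ffunE; case: (eqVneq l i) => [->|nli]; first by rewrite tpermL.
case: (eqVneq l j) => [->|nlj]; first by rewrite tpermR.
by rewrite tpermD // eq_sym.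
Qed.

Lemma rev_invariant_psi (P : pred 'I_k) :
  (forall x, P (rev_ord x) = P x) -> forall i j p l, P (psi i j p l) = P (p (tperm i j l)).
Proof. by move=> Prev i j p l; rewrite psi_tpermE; case: ifP. Qed.

Lemma Bset_psi i j p : Bset (psi i j p) = tperm i j @^-1: Bset p.
Proof. by apply/setP => l; rewrite !inE; apply: (rev_invariant_psi boundary_rev). Qed.

Definition central_pos p := [forall l, boundary (p l) || midpoint (p l)].

Lemma central_pos_psi i j p : central_pos (psi i j p) = central_pos p.
Proof.
have Prev x : boundary (rev_ord x) || midpoint (rev_ord x) = boundary x || midpoint x.
  by rewrite boundary_rev midpoint_rev.
rewrite /central_pos; apply/forallP/forallP => H l; last by rewrite (rev_invariant_psi Prev).
by have := H (tperm i j l); rewrite (rev_invariant_psi Prev) tpermK.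
Qed.

Lemma move_relE p q : move_rel p q -> q = p \/ exists i j, q = psi i j p.
Proof.
case/existsP=> i /existsP [j /existsP [c /andP [_ /eqP <-]]].
by rewrite /apply_move; case: ifP => _; [right; exists i, j | left].
Qed.

Lemma cclass_psi p0 p i j : p \in cclass p0 -> i != j -> psi i j p \in cclass p0.
Proof.
rewrite !inE => p0p nij; apply: connect_trans p0p (connect1 _).
apply/existsP; exists i; apply/existsP; exists j; apply/existsP; exists p.
rewrite nij /apply_move /=; case: ifP => // /negP []; apply/forallP => l; exact/implyP.
Qed.

Lemma cclass_invariant (T : Type) (f : pos k n -> T) p0 p :
  (forall i j q, f (psi i j q) = f q) -> p \in cclass p0 -> f p = f p0.
Proof.
move=> f_psi; rewrite inE => /connectP [s]; elim: s p0 => [|r s IH] p0 /=.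
  by move=> _ ->.
case/andP => /move_relE r_p0 /IH {}IH /IH ->.
by case: r_p0 => [-> | [i [j ->]]].
Qed.

Lemma card_Bset_cclass p0 p : p \in cclass p0 -> #|Bset p| = #|Bset p0|.
Proof.
by apply: (@cclass_invariant _ (fun q : pos k n => #|Bset q|)) => i j q;
  rewrite Bset_psi card_preimset //; exact: perm_inj.
Qed.

Lemma central_pos_cclass p0 p : p \in cclass p0 -> central_pos p = central_pos p0.
Proof. exact/cclass_invariant/central_pos_psi. Qed.

Lemma bar_midpoint x : ((bar k x).*2.+1 == k) = midpoint x.
Proof. rewrite /bar /midpoint -!addnn; have := ltn_ord x; lia. Qed.

Lemma chars_midpoint p : all (fun c => c.*2.+1 == k) (chars p) = central_pos p.
Proof.
rewrite /chars all_sort all_map; apply/allP/forallP => H l.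
  case: (boolP (boundary (p l))) => //= nb; rewrite -bar_midpoint.
  by apply: H; rewrite mem_enum inE in_Bset.
by rewrite mem_enum inE in_Bset => nb /=; rewrite bar_midpoint; have := H l; rewrite (negbTE nb).
Qed.

Lemma central_cclass p0 p : p \in cclass p0 -> central (cclass p0) = central_pos p.
Proof.
move=> p0p; rewrite (central_pos_cclass p0p); apply/forall_inP/idP => [H | c0 q p0q].
  by rewrite -chars_midpoint; apply: H; rewrite inE connect0.
by rewrite chars_midpoint (central_pos_cclass p0q).
Qed.

Definition rev_at i p : pos k n := [ffun l => if l == i then rev_ord (p l) else p l].

Lemma psi_psi i j p : i != j -> psi i j (psi i j p) = rev_at i (rev_at j p).
Proof.
move=> nij; apply/ffunP => l; rewrite !ffunE.
case: (eqVneq l i) => [->|nli]; first by rewrite eqxx (negbTE nij) eq_sym (negbTE nij).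
by case: (eqVneq l j) => [->|nlj]; rewrite ?eqxx ?(negbTE nij).
Qed.

Lemma rev_atC i j p : rev_at i (rev_at j p) = rev_at j (rev_at i p).
Proof. by apply/ffunP => l; rewrite !ffunE; case: (l == i); case: (l == j). Qed.

Definition same_boundary p q := Bset p = Bset q /\ {in Bset p, p =1 q}.

Lemma same_boundary_trans p q r :
  same_boundary p q -> same_boundary q r -> same_boundary p r.
Proof.
move=> [Bpq pq] [Bqr qr]; split; first by rewrite Bpq.
by move=> l lB; rewrite pq // qr // -Bpq.
Qed.

Lemma same_boundary_rev_at i p : ~~ boundary (p i) -> same_boundary p (rev_at i p).
Proof.
move=> nbi; split.
  by apply/setP => l; rewrite !in_Bset ffunE; case: eqP => [->|//]; rewrite boundary_rev.
by move=> l; rewrite in_Bset ffunE; case: eqP => [->|//]; rewrite (negbTE nbi).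
Qed.

Lemma cclass_undo_rev_boundary p0 p j l : j != l -> boundary (p j) -> boundary (p l) ->
  rev_at j p \in cclass p0 -> p \in cclass p0.
Proof.
move=> njl bj bl rpA; have nlj : l != j by rewrite eq_sym.
case: (boundary_eq_or_rev bj bl) => Elj.
  suff -> : p = psi l j (rev_at j p) by exact: cclass_psi.
  apply/ffunP => z; rewrite !ffunE (negbTE nlj) eqxx.
  case: (eqVneq z l) => [->|nzl]; first by rewrite rev_ordK Elj.
  by case: (eqVneq z j) => [->|//]; rewrite Elj.
suff -> : p = psi j l (rev_at j p) by exact: cclass_psi.
apply/ffunP => z; rewrite !ffunE (negbTE nlj) eqxx.
case: (eqVneq z j) => [->|nzj]; first by rewrite Elj rev_ordK.
by case: (eqVneq z l) => [->|//]; rewrite Elj.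
Qed.

Lemma cclass_rev_interior (hn : 3 <= n) p0 p i : p \in cclass p0 -> ~~ boundary (p i) ->
  exists2 q, q \in cclass p0 & same_boundary p q /\ q i = rev_ord (p i).
Proof.
move=> p0p nbi.
have rev2_cclass j : j != i -> rev_at i (rev_at j p) \in cclass p0.
  move=> nji; have nij : i != j by rewrite eq_sym.
  by rewrite -psi_psi //; do 2 apply: cclass_psi => //.
case: (pickP (fun j => (j != i) && ~~ boundary (p j))) => [j /andP [nji nbj] | bnd_others].
  exists (rev_at i (rev_at j p)); first exact: rev2_cclass.
  have rev_at_j_i : rev_at j p i = p i by rewrite ffunE eq_sym (negbTE nji).
  split; last by rewrite ffunE eqxx rev_at_j_i.
  apply: same_boundary_trans (same_boundary_rev_at nbj) _.
  by apply: same_boundary_rev_at; rewrite rev_at_j_i.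
have [j [l [+ + njl]]] : exists j l, [/\ j \in [set~ i], l \in [set~ i] & j != l].
  by apply/card_gt1P; rewrite cardsC1 card_ord; lia.
rewrite !in_setC1 => nji nli.
have rev_at_i_other m : m != i -> rev_at i p m = p m by rewrite ffunE => /negbTE ->.
have bnd_other m : m != i -> boundary (rev_at i p m).
  by move=> nmi; rewrite rev_at_i_other //; have := bnd_others m; rewrite nmi => /negbFE.
exists (rev_at i p); last by split; [exact: same_boundary_rev_at | rewrite ffunE eqxx].
apply: (cclass_undo_rev_boundary njl); rewrite ?bnd_other //.
by rewrite rev_atC; exact: rev2_cclass.
Qed.

Lemma same_boundary_central_eq p q :
  central_pos p -> central_pos q -> same_boundary p q -> p = q.
Proof.
move=> /forallP cp /forallP cq [Bpq pq]; apply/ffunP => l.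
case: (boolP (l \in Bset p)) => [|nlB]; first exact: pq.
have nlB' : l \notin Bset q by rewrite -Bpq.
rewrite in_Bset in nlB; rewrite in_Bset in nlB'.
have := cp l; have := cq l; rewrite (negbTE nlB) (negbTE nlB') /midpoint /= => /eqP mq /eqP mp.
apply: ord_inj; move: mp mq; rewrite -!addnn; lia.
Qed.

Definition boundary_sign p i := (p i : nat) == k.-1.

Lemma epsv_boundary_sign p i : boundary (p i) -> epsv k (boundary_sign p i) = p i.
Proof. by rewrite /boundary /boundary_sign /epsv; case: ifP => /eqP; lia. Qed.

Lemma boundary_epsv p i b : (p i : nat) = epsv k b -> boundary (p i).
Proof. by rewrite /boundary /epsv => ->; case: b; rewrite eqxx ?orbT. Qed.

Lemma epsv_inj : 2 <= k -> injective (epsv k).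
Proof. by rewrite /epsv => k2 [] [] //=; lia. Qed.

Lemma mem_ClP (A : {set pos k n}) S e p : p \in Cl A S e <->
  [/\ p \in A, Bset p = S & {in S, forall s, (p s : nat) = epsv k (e s)}].
Proof.
rewrite inE; split => [/and3P [pA /eqP BS /forall_inP H] | [pA BS H]].
  by split => // s /H /eqP.
by rewrite pA BS eqxx; apply/forall_inP => s /H ->.
Qed.

Lemma Cl_subset (A : {set pos k n}) S e : Cl A S e \subset A.
Proof. by apply/subsetP => p /mem_ClP []. Qed.

Lemma mem_Cl_boundary_sign (A : {set pos k n}) p : p \in A -> p \in Cl A (Bset p) (boundary_sign p).
Proof. by move=> pA; apply/mem_ClP; split => // s; rewrite in_Bset => /epsv_boundary_sign. Qed.

Lemma Cl_uniq (hk : 2 <= k) (A : {set pos k n}) S e S' e' p :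
  p \in Cl A S e -> p \in Cl A S' e' -> S = S' /\ {in S, e =1 e'}.
Proof.
move=> /mem_ClP [_ <- pe] /mem_ClP [_ <- pe']; split=> // s sB.
by apply: (epsv_inj hk); rewrite -pe // -pe'.
Qed.

Lemma Cl_same_boundary (A : {set pos k n}) S e p q : p \in Cl A S e -> q \in A ->
  q \in Cl A S e <-> same_boundary p q.
Proof.
move=> /mem_ClP [_ BpS pe] qA; split.
  move=> /mem_ClP [_ BqS qe]; split; first by rewrite BpS BqS.
  by move=> s; rewrite BpS => sS; apply: val_inj; rewrite /= pe // qe.
move=> [Bpq pq]; apply/mem_ClP; split; rewrite -?Bpq //.
by move=> s sS; rewrite -pq ?BpS // pe.
Qed.

Lemma card_Cl_noncentral (hn : 3 <= n) p0 S e p : ~~ central (cclass p0) ->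
  p \in Cl (cclass p0) S e -> 1 < #|Cl (cclass p0) S e|.
Proof.
move=> noncentral pC; have pA := subsetP (Cl_subset _ _ _) _ pC.
rewrite (central_cclass pA) in noncentral.
have [i /norP [nbi nmi]] : exists i, ~~ (boundary (p i) || midpoint (p i)).
  by apply/existsP; rewrite -negb_forall.
have [q qA [pq qi]] := cclass_rev_interior hn pA nbi.
apply/card_gt1P; exists p, q; split => //; first exact/(Cl_same_boundary pC qA).
by apply: contraNneq nmi => pq_eq; rewrite -rev_ord_eq -qi pq_eq.
Qed.

Lemma Cl_central p0 S e p : central (cclass p0) ->
  p \in Cl (cclass p0) S e -> Cl (cclass p0) S e = [set p].
Proof.
move=> central_A pC; have pA := subsetP (Cl_subset _ _ _) _ pC.
apply/setP => q; rewrite in_set1; apply/idP/eqP => [qC | ->//].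
have qA := subsetP (Cl_subset _ _ _) _ qC.
apply/esym/same_boundary_central_eq; last exact/(Cl_same_boundary pC qA).
  by rewrite -(central_cclass pA).
by rewrite -(central_cclass qA).
Qed.

End Positions.

Section Coloring.
Variables k n : nat.
Implicit Types (p q : pos k n) (S : {set 'I_n}) (e : 'I_n -> bool).
Local Open Scope ring_scope.

(* The two opposite corners of a cubie face lie in a big face only if no free
   direction of the cubie face is fixed by the big face. *)
Lemma has_color_values p S e :
  has_color p S e -> {in S, forall s, (p s : nat) = epsv k (e s)}.
Proof.
case=> _ [_ [T [f [_ face_sub]]]] s sS.
pose corner (b : bool) l : rat := (p l)%:R + (if l \in T then b else f l)%:R.
have corner_face b : in_cubie_face p T f (corner b).
  move=> l; rewrite /corner; case: (l \in T) => //.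
  by rewrite lerDl ler0n lerD2l; case: b.
have corner_s b : corner b s = if e s then k%:R else 0.
  by have [_ ->] := face_sub _ (corner_face b).
have sT : s \notin T.
  apply/negP => sT; have := corner_s true; rewrite -(corner_s false) /corner sT.
  by move/addrI/eqP; rewrite eqr_nat.
have := corner_s false; rewrite /corner (negbTE sT) -natrD /epsv.
have := ltn_ord (p s); case: (e s) => lt /eqP; rewrite ?eqr_nat ?pnatr_eq0 => /eqP.
  by case: (f s) lt => /=; lia.
by case: (f s) => /=; lia.
Qed.

Lemma has_color_of_values p S e : (0 < #|S|)%N -> (#|S| + 2 <= n)%N ->
  {in S, forall s, (p s : nat) = epsv k (e s)} -> has_color p S e.
Proof.
move=> S_gt0 S_small pe; do 2 split => //; exists (~: S), e; split.
  by rewrite cardsCs card_ord setCK.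
move=> x x_face; split => [i | s sS].
  have := x_face i; rewrite inE; case: (boolP (i \in S)) => iS /=.
    move=> /eqP ->; rewrite -natrD ler0n ler_nat pe //.
    by have := ltn_ord (p i); rewrite /epsv; case: (e i) => /=; lia.
  case/andP => lo hi; rewrite (le_trans _ lo) ?ler0n //=.
  by rewrite (le_trans hi) // natr1 ler_nat.
have := x_face s; rewrite inE sS /= => /eqP ->; rewrite -natrD pe //.
by have := ltn_ord (p s); rewrite /epsv; case: (e s) => /= lt; rewrite ?addn0 // addn1 prednK //; lia.
Qed.

Lemma same_coloringP (hn : (3 <= n)%N) p q : same_coloring p q <-> same_boundary p q.
Proof.
have boundary_in p' q' : same_coloring p' q' -> {in Bset p', forall s, s \in Bset q' /\ q' s = p' s}.
  move=> col s sB.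
  have col_s : has_color p' [set s] (boundary_sign p').
    apply: has_color_of_values; rewrite ?cards1 //.
    by move=> s' /set1P ->; rewrite epsv_boundary_sign -?in_Bset.
  have /has_color_values /(_ s (set11 s)) := iffLR (col _ _) col_s.
  rewrite epsv_boundary_sign -?in_Bset // => qs.
  by split; [rewrite !in_Bset /boundary qs in sB * | apply: ord_inj].
split => [col | [Bpq pq] S e].
  have col' : same_coloring q p by move=> S e; exact: iff_sym (col S e).
  split; last by move=> s /(boundary_in _ _ col) [_ ->].
  apply/setP => s; apply/idP/idP => [/(boundary_in _ _ col) []|/(boundary_in _ _ col') []] //.
have agree S' : {in S', forall s, (p s : nat) = epsv k (e s)} <-> {in S', forall s, (q s : nat) = epsv k (e s)}.
  split => H s sS; have bnd_s := boundary_epsv (H s sS).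
    by rewrite -pq ?H // in_Bset.
  by rewrite pq ?H // Bpq in_Bset.
split => col; have [S_gt0 [S_small _]] := col; apply: has_color_of_values => //.
  exact/agree/has_color_values.
exact/agree/has_color_values.
Qed.

End Coloring.

Theorem mainTheorem3 (k n : nat) (hk : (2 <= k)%N) (hn : (3 <= n)%N)
  (p0 : pos k n) (hp0 : external p0) :
  let A := cclass p0 in
  let m := #|Bset p0| in
  (* A is the disjoint union of the sets Cl(S, eps), |S| = m *)
  (forall p, p \in A -> exists (S : {set 'I_n}) (e : 'I_n -> bool), #|S| = m /\ p \in Cl A S e) /\
  (forall (S : {set 'I_n}) (e : 'I_n -> bool), Cl A S e \subset A) /\
  (forall (S : {set 'I_n}) (e : 'I_n -> bool) (S' : {set 'I_n}) (e' : 'I_n -> bool) p, p \in Cl A S e -> p \in Cl A S' e' ->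
       S = S' /\ {in S, e =1 e'}) /\
  (* same coloring iff same Cl(S, eps) *)
  (forall p q, p \in A -> q \in A ->
     (same_coloring p q <->
      exists (S : {set 'I_n}) (e : 'I_n -> bool), #|S| = m /\ p \in Cl A S e /\ q \in Cl A S e)) /\
  (* non-central: every nonempty Cl has at least two positions *)
  (~~ central A -> forall (S : {set 'I_n}) (e : 'I_n -> bool), #|S| = m -> Cl A S e != set0 ->
       (2 <= #|Cl A S e|)%N) /\
  (* central: every nonempty Cl is a single position *)
  (central A -> forall (S : {set 'I_n}) (e : 'I_n -> bool), #|S| = m -> Cl A S e != set0 ->
       #|Cl A S e| = 1%N).
Proof.
move=> A m.
split.
  move=> p pA; exists (Bset p), (boundary_sign p).
  by split; [exact: card_Bset_cclass | exact: mem_Cl_boundary_sign].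
split; first exact: Cl_subset.
split; first exact: Cl_uniq.
split.
  move=> p q pA qA; rewrite same_coloringP //; split => [pq | [S [e [_ [pC qC]]]]].
    have pC := mem_Cl_boundary_sign pA.
    exists (Bset p), (boundary_sign p); rewrite (card_Bset_cclass pA).
    by rewrite (Cl_same_boundary pC qA).
  exact/(Cl_same_boundary pC (subsetP (Cl_subset _ _ _) _ qC)).
split=> [noncentral | central_A] S e _ /set0Pn [p pC].
  exact: card_Cl_noncentral pC.
by rewrite (Cl_central central_A pC) cards1.
Qed.
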